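(* Let $f:\{0,\tfrac12,1\}^V\to\mathbb{R}$ be a bisubmodular function and let $\mathcal{A}\subseteq\{0,\tfrac12,1\}^V$ be its set of minimising assignments. Then the set $\mathcal{A}\cap\{0,1\}^V$ of integral global minimisers of $f$ can be modelled as the set of solutions to a (crisp) 2-CNF formula on $V$.
   Context: The operations $\sqcap,\sqcup$ on $\{0,\tfrac12,1\}$ are: $x\sqcap x=x\sqcup x=x$; $0\sqcap1=0\sqcup1=\tfrac12$; for $a\in\{0,1\}$, $a\sqcap\tfrac12=\tfrac12$ and $a\sqcup\tfrac12=a$ (and symmetrically). $f$ is bisubmodular if $f(A)+f(B)\ge f(A\sqcap B)+f(A\sqcup B)$ for all $A,B\in\{0,\tfrac12,1\}^V$, operations coordinatewise. *)

From mathcomp Require Import all_boot all_order all_algebra.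
Set Implicit Arguments. Unset Strict Implicit. Unset Printing Implicit Defensive.
Import Order.TTheory GRing.Theory Num.Theory.
Local Open Scope ring_scope.

Inductive tern := H0 | Hh | H1.

Definition half_eqb (a b : tern) : bool :=
  match a, b with H0, H0 | Hh, Hh | H1, H1 => true | _, _ => false end.

Definition hmeet (a b : tern) : tern :=
  match a, b with
  | H0, H0 => H0
  | H1, H1 => H1
  | _, _ => Hh
  end.

Definition hjoin (a b : tern) : tern :=
  match a, b with
  | H0, H0 => H0
  | H1, H1 => H1
  | Hh, Hh => Hh
  | H0, H1 | H1, H0 => Hh
  | H0, Hh | Hh, H0 => H0
  | H1, Hh | Hh, H1 => H1
  end.

Definition vmeet (V : Type) (A B : V -> tern) : V -> tern := fun v => hmeet (A v) (B v).
Definition vjoin (V : Type) (A B : V -> tern) : V -> tern := fun v => hjoin (A v) (B v).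

Definition bisubmodular (V : Type) (R : realDomainType) (f : (V -> tern) -> R) : Prop :=
  forall A B : V -> tern, f (vmeet A B) + f (vjoin A B) <= f A + f B.

Definition is_minimiser (V : Type) (R : realDomainType) (f : (V -> tern) -> R)
  (A : V -> tern) : Prop := forall B : V -> tern, f A <= f B.

Definition of_bool (V : Type) (x : V -> bool) : V -> tern :=
  fun v => if x v then H1 else H0.

Definition literal (V : Type) := (V * bool)%type.
Definition clause (V : Type) := seq (literal V).

Definition lit_sat (V : Type) (x : V -> bool) (l : literal V) : bool :=
  x l.1 == l.2.
Definition clause_sat (V : Type) (x : V -> bool) (c : clause V) : bool :=
  has (lit_sat x) c.
Definition is_2CNF (V : Type) (phi : seq (clause V)) : bool :=
  all (fun c => size c <= 2)%N phi.
Definition cnf_sat (V : Type) (x : V -> bool) (phi : seq (clause V)) : bool :=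
  all (clause_sat x) phi.

From mathcomp Require Import all_boot all_order all_algebra.
From mathcomp Require Import lra.
From Stdlib Require Import Classical FunctionalExtensionality.

Set Implicit Arguments.
Unset Strict Implicit.
Unset Printing Implicit Defensive.

(* Minimisers of a bisubmodular function are closed under the coordinatewise
   operations ⊓ and ⊔. On Boolean assignments the majority operation is a
   composite of ⊓ and ⊔, so the integral minimisers form a Boolean relation
   closed under majority. Such a relation is determined by its projections on
   pairs of coordinates (induction on the number of prescribed coordinates,
   combining three partial witnesses by majority), so it is exactly the set of
   models of the 2-clauses valid on all of it. *)

Section BisubmodularMinimisers.
Variables (V : Type) (R : realDomainType) (f : (V -> tern) -> R).
Hypothesis bisub_f : bisubmodular f.

Lemma minimiser_vmeet A B :
  is_minimiser f A -> is_minimiser f B -> is_minimiser f (vmeet A B).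
Proof.
move=> minA minB C; have := bisub_f A B; have := minA C; have := minB (vjoin A B).
lra.
Qed.

Lemma minimiser_vjoin A B :
  is_minimiser f A -> is_minimiser f B -> is_minimiser f (vjoin A B).
Proof.
move=> minA minB C; have := bisub_f A B; have := minA C; have := minB (vmeet A B).
lra.
Qed.

End BisubmodularMinimisers.

Definition majb (a b c : bool) : bool := [|| a && b, a && c | b && c].

Lemma majb_id12 a c : majb a a c = a. Proof. by case: a; case: c. Qed.
Lemma majb_id13 a b : majb a b a = a. Proof. by case: a; case: b. Qed.
Lemma majb_id23 a b : majb b a a = a. Proof. by case: a; case: b. Qed.

Definition maj (V : Type) (x y z : V -> bool) : V -> bool :=
  fun v => majb (x v) (y v) (z v).

Lemma of_bool_maj (V : Type) (x y z : V -> bool) :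
  of_bool (maj x y z) =
  vjoin (vjoin (vmeet (of_bool x) (of_bool y)) (of_bool z))
        (vjoin (vmeet (of_bool x) (of_bool z)) (of_bool y)).
Proof.
apply: functional_extensionality => v; rewrite /of_bool /vjoin /vmeet /maj /majb.
by case: (x v); case: (y v); case: (z v).
Qed.

Definition majority_closed (V : Type) (P : (V -> bool) -> Prop) : Prop :=
  forall x y z, P x -> P y -> P z -> P (maj x y z).

Lemma minimiser_majority_closed (V : Type) (R : realDomainType)
    (f : (V -> tern) -> R) :
  bisubmodular f -> majority_closed (fun x => is_minimiser f (of_bool x)).
Proof.
move=> bisub_f x y z minx miny minz; rewrite of_bool_maj.
by do 2?apply: minimiser_vjoin => //; apply: minimiser_vmeet.
Qed.

Section MajorityClosedRelations.
Variables (V : finType) (P : (V -> bool) -> Prop).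
Hypothesis maj_closed : majority_closed P.

Lemma majority_closed_agree_on x :
  (forall u v, exists2 y, P y & y u = x u /\ y v = x v) ->
  forall (s : seq V) u v, exists2 y, P y & {in [:: u, v & s], y =1 x}.
Proof.
move=> agree2; elim=> [|w s IHs] u v.
  have [y Py [yu yv]] := agree2 u v.
  by exists y => // t; rewrite !inE => /orP [] /eqP ->.
have [y1 Py1 agree_uv] := IHs u v.
have [y2 Py2 agree_wu] := IHs w u.
have [y3 Py3 [y3w y3v]] := agree2 w v.
exists (maj y1 y2 y3); first exact: maj_closed.
move=> t; rewrite !inE /maj => /or4P [/eqP-> | /eqP-> | /eqP-> | ts].
- by rewrite agree_uv ?inE ?eqxx // agree_wu ?inE ?eqxx ?orbT // majb_id12.
- by rewrite agree_uv ?inE ?eqxx ?orbT // y3v majb_id13.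
- by rewrite agree_wu ?inE ?eqxx // y3w majb_id23.
rewrite agree_uv ?inE ?ts ?orbT // agree_wu ?inE ?ts ?orbT //.
exact: majb_id12.
Qed.

Lemma majority_closed_pairwise x :
  (exists y, P y) -> (forall u v, exists2 y, P y & y u = x u /\ y v = x v) -> P x.
Proof.
move=> [y0 Py0] agree2.
case def_e: (enum V) => [|w s].
  suff -> : x = y0 by [].
  by apply: functional_extensionality => t; have := mem_enum V t; rewrite def_e.
have [y Py agree] := majority_closed_agree_on agree2 s w w.
suff -> : x = y by [].
by apply: functional_extensionality => t; rewrite agree // in_cons -def_e mem_enum orbT.
Qed.

End MajorityClosedRelations.

Lemma exists_filter_prop (T : eqType) (Q : T -> Prop) (s : seq T) :
  exists s' : seq T, forall c, c \in s' <-> c \in s /\ Q c.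
Proof.
elim: s => [|a s [s' mem_s']]; first by exists [::] => c; split=> [|[]].
have [Qa | nQa] := classic (Q a); [exists (a :: s') | exists s'] => c.
  rewrite !in_cons; split.
    by case/orP => [/eqP-> | /mem_s' [cs Qc]]; rewrite ?eqxx ?cs ?orbT.
  by case=> /orP [/eqP-> | cs] Qc; rewrite ?eqxx //; apply/orP; right; apply/mem_s'.
rewrite in_cons mem_s'; split => [[cs Qc] | [/orP [/eqP-> // | cs] Qc //]].
by rewrite cs orbT.
Qed.

Section TwoClauses.
Variable V : finType.

Definition two_clauses : seq (clause V) :=
  [::] :: [seq [:: a; b] | a <- enum {: V * bool}, b <- enum {: V * bool}].

Lemma two_clauses_2CNF : is_2CNF two_clauses.
Proof. by apply/allP => c; rewrite inE => /predU1P [-> | /allpairsP [[a b] [_ _ ->]]]. Qed.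

Lemma mem_two_clauses_pair a b : [:: a; b] \in two_clauses.
Proof. by rewrite inE; apply/predU1P; right; apply/allpairsP; exists (a, b); rewrite !mem_enum. Qed.

Lemma clause_sat_disagree (x y : V -> bool) u v :
  clause_sat y [:: (u, ~~ x u); (v, ~~ x v)] = (y u != x u) || (y v != x v).
Proof.
by rewrite /clause_sat /lit_sat /= orbF; case: (y u) (x u) (y v) (x v) => [] [] [] [].
Qed.

(* Otherwise the empty clause, resp. the clause forbidding the values of x at
   u and v, would be valid on P and violated by x. *)
Lemma sat_valid_two_clauses_agree (P : (V -> bool) -> Prop) (x : V -> bool) :
  (forall c, c \in two_clauses -> (forall y, P y -> clause_sat y c) -> clause_sat x c) ->
  (exists y, P y) /\ forall u v, exists2 y, P y & y u = x u /\ y v = x v.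
Proof.
move=> sat_valid; split.
  apply: NNPP => noP; suff: clause_sat x [::] by [].
  apply: sat_valid; first exact: mem_head.
  by move=> y Py; case: noP; exists y.
move=> u v; apply: NNPP => noP.
suff: clause_sat x [:: (u, ~~ x u); (v, ~~ x v)] by rewrite clause_sat_disagree !eqxx.
apply: sat_valid; first exact: mem_two_clauses_pair.
move=> y Py; rewrite clause_sat_disagree -negb_and.
by apply/negP => /andP [/eqP yu /eqP yv]; case: noP; exists y.
Qed.

End TwoClauses.

Theorem lemma23 (V : finType) (R : realDomainType) (f : (V -> tern) -> R) :
  bisubmodular f ->
  exists phi : seq (clause V),
    is_2CNF phi /\
    forall x : V -> bool, cnf_sat x phi <-> is_minimiser f (of_bool x).
Proof.
move=> bisub_f; pose M x := is_minimiser f (of_bool x).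
have [phi mem_phi] := exists_filter_prop (fun c => forall y, M y -> clause_sat y c)
                                         (two_clauses V).
exists phi; split.
  by apply/allP => c /mem_phi [/(allP (two_clauses_2CNF V))].
move=> x; split => [/allP sat_phi | Mx]; last first.
  by apply/allP => c /mem_phi [_]; apply.
have [nonempty agree2] : (exists y, M y) /\ forall u v, exists2 y, M y & y u = x u /\ y v = x v.
  by apply: sat_valid_two_clauses_agree => c c2 valid_c; apply: sat_phi; apply/mem_phi.
exact: (majority_closed_pairwise (minimiser_majority_closed bisub_f) nonempty agree2).
Qed.
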